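(* There is a constant $A$ such that, for all sufficiently large $n$, every big irreducible representation $\lambda$ of $S_n$ and every $\pi\in S_n$ with $t(\pi) > \sqrt{n}\log n$ obey $\left|\chi_\lambda(\pi)/d_\lambda\right| \le A^{t(\pi)} n^{-t(\pi)/2}$.
   Context: An irreducible representation $\lambda$ of $S_n$ with character $\chi_\lambda$ and dimension $d_\lambda$ is big if $d_\lambda > e^{-\sqrt{n}\log n}\sqrt{n!}$ (natural logarithm). For $\pi\in S_n$, $t(\pi)$ is the minimum number of transpositions whose product is $\pi$. *)

From HB Require Import structures.
From mathcomp Require Import all_boot all_order all_algebra all_fingroup all_solvable all_field all_character.
From mathcomp Require Import reals sequences exp.
Set Implicit Arguments. Unset Strict Implicit. Unset Printing Implicit Defensive.
Import Order.TTheory GRing.Theory Num.Theory.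

Definition Sn (n : nat) : {group 'S_n} := [set: 'S_n]%G.

Definition transp_prod (n k : nat) (pi : 'S_n) : bool :=
  [exists ts : k.-tuple ('I_n * 'I_n),
     all dpair ts && (pi == (\prod_(t <- ts) tperm t.1 t.2)%g)].

Lemma transp_prod_exists (n : nat) (pi : 'S_n) : exists k, transp_prod k pi.
Proof.
case: (prod_tpermP pi) => ts def_pi dts.
exists (size ts); apply/existsP; exists (in_tuple ts).
by rewrite /= dts def_pi eqxx.
Qed.

Definition tmin (n : nat) (pi : 'S_n) : nat := ex_minn (transp_prod_exists pi).

(* dimension d_lambda of the irreducible representation with character 'chi_i
   (the value of the character at the identity, a natural number). *)
Definition dim_irr (n : nat) (i : Iirr (Sn n)) : nat := Num.truncn ('chi_i 1%g).

Definition big (R : realType) (n : nat) (i : Iirr (Sn n)) : Prop :=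
  (expR (- (Num.sqrt (n%:R : R) * ln (n%:R : R))) * Num.sqrt ((n `!)%:R : R)
     < (dim_irr i)%:R)%R.

From HB Require Import structures.
From mathcomp Require Import all_boot all_order all_algebra all_fingroup all_solvable all_field all_character.
From mathcomp Require Import reals sequences exp.
From mathcomp Require Import zify ring lra.
Import Order.TTheory GRing.Theory Num.Theory.
Set Implicit Arguments. Unset Strict Implicit. Unset Printing Implicit Defensive.

(* By the second orthogonality relation, |chi(pi)|^2 <= |C(pi)|.  If pi moves
   s points and has c nontrivial cycles, an element of C(pi) is determined by
   the permutation it induces on the n - s fixed points and by its values at
   one point of each nontrivial cycle, so |C(pi)| <= (n - s)! n^c; moreover
   t(pi) <= s - c and s <= 2 t(pi).  Hence
   |C(pi)| n^t <= (n - s)! n^s <= 4^s n! <= 16^t n!.  Bigness gives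
   n! < e^(2 sqrt n log n) d^2 <= 16^t d^2, since e <= 4 and t > sqrt n log n.
   Altogether |chi(pi)|^2 n^t <= 16^(2t) d^2. *)

Lemma leq_expn_ffact n m s : s <= n -> n ^ m * s ^_ m <= s ^ m * n ^_ m.
Proof.
move=> sn; elim: m => [|m IH]; first by rewrite !expn0 !ffactn0.
have step : n * (s - m) <= s * (n - m) by nia.
by have := leq_mul IH step; rewrite mulnACA [X in _ <= X]mulnACA !ffactnSr !expnSr.
Qed.

Lemma leq_bin_exp2 n m : 'C(n, m) <= 2 ^ n.
Proof.
have [le_mn | lt_nm] := leqP m n; last by rewrite bin_small.
rewrite -[2]/(1 + 1) expnDn (bigD1 (inord m)) //= inordK ?ltnS //.
by rewrite !exp1n !muln1 leq_addr.
Qed.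

Lemma leq_expn_ffact_double s : s ^ s <= s.*2 ^_ s.
Proof.
rewrite ffact_prod -[X in _ ^ X](card_ord s) -prod_nat_const.
by apply: leq_prod => i _; have := ltn_ord i; lia.
Qed.

Lemma leq_expn_self_fact s : s ^ s <= 4 ^ s * s`!.
Proof.
apply: leq_trans (leq_expn_ffact_double s) _.
by rewrite -bin_ffact leq_mul2r -[4]/(2 ^ 2) -expnM mul2n leq_bin_exp2 orbT.
Qed.

Lemma leq_expn_mul_fact n s : s <= n -> n ^ s * (n - s)`! <= 4 ^ s * n`!.
Proof.
move=> le_sn; rewrite -(ffact_fact le_sn) mulnA leq_mul2r; apply/orP; right.
have := leq_expn_ffact s le_sn; rewrite ffactnn => le_ratio.
rewrite -(leq_pmul2r (fact_gt0 s)); apply: leq_trans le_ratio _.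
by rewrite mulnAC leq_mul2r leq_expn_self_fact orbT.
Qed.

Section MovedPoints.
Variable n : nat.
Implicit Types (p g : 'S_n) (x y : 'I_n) (k : nat).

Definition moved p : {set 'I_n} := [set x | p x != x].

Lemma card_moved_le p : #|moved p| <= n.
Proof. by rewrite -[n in _ <= n]card_ord max_card. Qed.

Lemma card_moved_prod_tperm (ts : seq ('I_n * 'I_n)) :
  #|moved (\prod_(t <- ts) tperm t.1 t.2)%g| <= 2 * size ts.
Proof.
elim: ts => [|[a b] ts IH].
  by rewrite big_nil leqn0 cards_eq0; apply/eqP/setP => x; rewrite !inE perm1 eqxx.
rewrite big_cons /= mulnS; set q := (\prod_(_ <- _) _)%g in IH *.
have sub : moved (tperm a b * q) \subset [set a; b] :|: moved q.
  apply/subsetP => x; rewrite !inE permM.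
  by case: tpermP => [->|->|_ _ ->]; rewrite ?eqxx ?orbT.
apply: leq_trans (subset_leq_card sub) _; apply: leq_trans (leq_card_setU _ _) _.
by apply: leq_add => //; rewrite cards2; case: (a != b).
Qed.

Lemma card_moved_transp_prod k p : transp_prod k p -> #|moved p| <= 2 * k.
Proof.
case/existsP=> ts /andP[_ /eqP ->].
by have := card_moved_prod_tperm ts; rewrite size_tuple.
Qed.

Lemma transp_prod_tmin p : transp_prod (tmin p) p.
Proof. by rewrite /tmin; case: ex_minnP. Qed.

Lemma tmin_le k p : transp_prod k p -> tmin p <= k.
Proof. by rewrite /tmin; case: ex_minnP => m _; apply. Qed.

Lemma transp_prod_tpermM k p x y :
  x != y -> transp_prod k p -> transp_prod k.+1 (tperm x y * p).
Proof.
move=> xy /existsP[ts /andP[dts /eqP ->]]; apply/existsP.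
exists [tuple of (x, y) :: ts]; by rewrite /= xy dts /= big_cons.
Qed.

Lemma porbit_fixed p x : p x = x -> porbit p x = [set x].
Proof.
move=> px; apply/setP => y; rewrite inE; apply/porbitP/eqP => [[i ->]|->].
  by rewrite permX_fix.
by exists 0; rewrite expg0 perm1.
Qed.

Lemma card_porbits_le p : #|porbits p| <= n.
Proof. by rewrite -[n in _ <= n]card_ord leq_imset_card. Qed.

(* Multiplying p by the transposition (x, p x) splits the cycle of x in two. *)
Lemma transp_prod_porbits p : transp_prod (n - #|porbits p|) p.
Proof.
have [m] := ubnP (n - #|porbits p|); elim: m p => // m IH p /ltnSE le_p.
case: (pickP [pred x | p x != x]) => [x /= px | fixp].
  set t := tperm x (p x).
  have x_orbit : x \in porbit p (p x).
    by rewrite -[p x]/((p ^+ 1)%g x) porbit_perm porbit_id.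
  have card_tp : #|porbits (t * p)| = #|porbits p|.+1.
    by have := porbits_mul_tperm p x (p x); rewrite /= x_orbit eq_sym px addn0 addn1.
  have le_tp := card_porbits_le (t * p).
  have -> : n - #|porbits p| = (n - #|porbits (t * p)|).+1 by lia.
  rewrite -[p in transp_prod _ p]mul1g -(tperm2 x (p x)) -mulgA.
  by apply: transp_prod_tpermM; rewrite 1?eq_sym // IH //; lia.
have p1 : p = 1%g by apply/permP => x; rewrite perm1; apply/eqP/negbFE/fixp.
have inj : injective (porbit p).
  by move=> x y; rewrite !porbit_fixed ?p1 ?perm1 // => /set1_inj.
rewrite /porbits card_imset // card_ord subnn.
by apply/existsP; exists [tuple]; rewrite /= p1 big_nil.
Qed.

(* The default x is never used, since x lies in its own orbit. *)
Definition porbit_rep p x := odflt x [pick y in porbit p x].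

Definition porbit_reps p := [set x | porbit_rep p x == x].

Definition cycle_reps p := porbit_reps p :&: moved p.

Lemma porbit_rep_porbit p x : porbit_rep p x \in porbit p x.
Proof. by rewrite /porbit_rep; case: pickP => // /(_ x); rewrite porbit_id. Qed.

Lemma porbit_rep_eq p x y : y \in porbit p x -> porbit_rep p y = porbit_rep p x.
Proof.
by rewrite -eq_porbit_mem /porbit_rep => /eqP ->; case: pickP => // /(_ x); rewrite porbit_id.
Qed.

Lemma porbit_rep_fixed p x : p x = x -> porbit_rep p x = x.
Proof. by move=> px; apply/set1P; rewrite -(porbit_fixed px) porbit_rep_porbit. Qed.

Lemma card_porbit_reps p : #|porbit_reps p| <= #|porbits p|.
Proof.
have inj : {in porbit_reps p &, injective (porbit p)}.
  move=> x y; rewrite !inE => /eqP rx /eqP ry eq_xy.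
  by rewrite -rx -ry (porbit_rep_eq (_ : y \in porbit p x)) // eq_xy porbit_id.
rewrite -(card_in_imset inj); apply/subset_leq_card/subsetP => _ /imsetP[x _ ->].
exact: imset_f.
Qed.

Lemma cycle_repsP p x : p x != x -> exists2 r, r \in cycle_reps p & x \in porbit p r.
Proof.
move=> px; set r := porbit_rep p x; have rx : r \in porbit p x := porbit_rep_porbit p x.
exists r; last by rewrite porbit_sym.
rewrite !inE (porbit_rep_eq rx) eqxx /=; apply: contra px => /eqP pr.
by move: rx; rewrite porbit_sym porbit_fixed // inE => /eqP ->; rewrite pr.
Qed.

Lemma card_cycle_reps p : n - #|moved p| + #|cycle_reps p| <= #|porbits p|.
Proof.
have fixed_reps : ~: moved p \subset porbit_reps p.
  by apply/subsetP => x; rewrite !inE negbK => /eqP/porbit_rep_fixed ->.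
have -> : n - #|moved p| = #|porbit_reps p :\: moved p|.
  by rewrite setDE (setIidPr fixed_reps) [in RHS]cardsCs setCK card_ord.
by rewrite addnC cardsID card_porbit_reps.
Qed.

Lemma tmin_add_card_cycle_reps p : tmin p + #|cycle_reps p| <= #|moved p|.
Proof.
have := tmin_le (transp_prod_porbits p); have := card_cycle_reps p.
have := card_porbits_le p; have := card_moved_le p; lia.
Qed.

Lemma cent1_permX g p i x : g \in 'C[p]%g -> g ((p ^+ i)%g x) = (p ^+ i)%g (g x).
Proof. by move=> /cent1P cgp; rewrite -!permM (commuteX i cgp). Qed.

Lemma astabs_fixed_cent1 g p : g \in 'C[p]%g -> g \in 'N(~: moved p | 'P)%g.
Proof.
move=> cgp; apply/astabsP => x /=; rewrite apermE !inE !negbK.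
have := cent1_permX 1 x cgp; rewrite expg1 => gpx.
by rewrite -gpx (inj_eq (@perm_inj _ g)).
Qed.

Lemma card_cent1_perm p : #|'C[p]%g| <= (n - #|moved p|)`! * n ^ #|cycle_reps p|.
Proof.
set F := ~: moved p; set reps := cycle_reps p.
pose phi g := (restr_perm F g, [ffun j : 'I_#|reps| => g (enum_val j)]).
have phi_inj : {in 'C[p]%g &, injective phi}.
  move=> g h cgp chp [eqF eqR]; apply/permP => x.
  case: (boolP (x \in F)) => Fx.
    by rewrite -(restr_permE (astabs_fixed_cent1 cgp) Fx) eqF restr_permE ?astabs_fixed_cent1.
  move: Fx; rewrite inE negbK inE => px; have [r rep_r /porbitP[i ->]] := cycle_repsP px.
  rewrite !cent1_permX //; move/ffunP: eqR => /(_ (enum_rank_in rep_r r)).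
  by rewrite !ffunE enum_rankK_in // => ->.
have im_phi : phi @: 'C[p]%g \subset setX [set s | perm_on F s] [set: {ffun 'I_#|reps| -> 'I_n}].
  by apply/subsetP => _ /imsetP[g _ ->]; rewrite !inE restr_perm_on.
rewrite -(card_in_imset phi_inj); apply: leq_trans (subset_leq_card im_phi) _.
rewrite cardsX cardsE card_perm cardsT card_ffun !card_ord.
by rewrite [#|F|]cardsCs setCK card_ord.
Qed.

Lemma card_cent1_mul_tmin p : #|'C[p]%g| * n ^ tmin p <= 16 ^ tmin p * n`!.
Proof.
set s := #|moved p|; set T := tmin p; set c := #|cycle_reps p|.
have le_sn : s <= n := card_moved_le p.
have le_cTs : c + T <= s by rewrite addnC tmin_add_card_cycle_reps.
have le_s2T : s <= 2 * T := card_moved_transp_prod (transp_prod_tmin p).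
have le_exp : n ^ (c + T) <= n ^ s.
  have [n0 | n_gt0] := posnP n; last by rewrite leq_pexp2l.
  by have -> : c + T = s by lia.
apply: leq_trans (leq_mul (card_cent1_perm p) (leqnn _)) _.
rewrite -mulnA -expnD; apply: leq_trans (leq_mul (leqnn _) le_exp) _.
rewrite mulnC; apply: leq_trans (leq_expn_mul_fact le_sn) _.
by rewrite leq_mul2r -[16]/(4 ^ 2) -expnM leq_pexp2l // orbT.
Qed.
End MovedPoints.

Local Open Scope ring_scope.

Lemma irr_normX2_le_cent1 (gT : finGroupType) (G : {group gT}) (i : Iirr G) x :
  x \in G -> `|'chi_i x| ^+ 2 <= #|'C_G[x]%g|%:R.
Proof.
move=> Gx; have := second_orthogonality_relation x Gx; rewrite class_refl mulr1n => <-.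
by rewrite (bigD1 i) //= normCK lerDl; apply: sumr_ge0 => j _; apply: mul_conjC_ge0.
Qed.

Section BigIrreducible.
Variable R : realType.

Lemma expR1_le4 : expR (1 : R) <= 4.
Proof.
have e_half_gt0 : 0 < expR (2^-1 : R) := expR_gt0 _.
have e_half_inv := expRxMexpNx_1 (2^-1 : R).
have e_neg_half_ge := expR_ge1Dx (- (2^-1) : R).
have e_half_le2 : expR (2^-1 : R) <= 2 by nra.
have -> : expR (1 : R) = expR (2^-1) ^+ 2 by rewrite -expRM_natl divff // pnatr_eq0.
by rewrite expr2; nra.
Qed.

Lemma expR_natr_le (k : nat) : expR (k%:R : R) <= 4 ^+ k.
Proof.
rewrite -[k%:R]mulr1 expRM_natl.
by apply: lerXn2r; rewrite ?nnegrE ?expR_ge0 // expR1_le4.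
Qed.

Lemma sqrt_mul_ln_ge0 (n : nat) : 0 <= Num.sqrt (n%:R : R) * ln n%:R.
Proof.
case: n => [|n]; first by rewrite sqrtr0 mul0r.
by rewrite mulr_ge0 ?sqrtr_ge0 // ln_ge0 // ler1n.
Qed.

Lemma big_fact_lt n (i : Iirr (Sn n)) t :
  big R i -> Num.sqrt (n%:R : R) * ln n%:R < t%:R -> (n`! < (4 ^ t * dim_irr i) ^ 2)%N.
Proof.
rewrite /big expRN => big_i lt_T.
rewrite ltr_pdivrMl ?expR_gt0 // in big_i.
have le_exp : expR (Num.sqrt (n%:R : R) * ln n%:R) <= 4 ^+ t.
  by apply: le_trans (expR_natr_le t); rewrite ler_expR ltW.
have lt_sqrt : Num.sqrt (n`!%:R : R) < 4 ^+ t * (dim_irr i)%:R.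
  by apply: lt_le_trans big_i _; apply: ler_wpM2r.
rewrite -(ltr_nat R) natrX natrM natrX -{1}(sqr_sqrtr (ler0n R n`!)).
by rewrite ltr_pXn2r // ?nnegrE ?sqrtr_ge0 // mulr_ge0 // exprn_ge0.
Qed.
End BigIrreducible.

Theorem lemma7 (R : realType) :
  exists A : algC, (0 < A)%R /\
  exists N : nat, forall n : nat, (N <= n)%N ->
    forall (i : Iirr (Sn n)), big R i ->
    forall pi : 'S_n,
      (Num.sqrt (n%:R : R) * ln (n%:R : R) < (tmin pi)%:R)%R ->
      (`|'chi_i pi / 'chi_i 1%g| <= A ^+ tmin pi * (sqrtC (n%:R : algC)) ^- tmin pi)%R.
Proof.
exists 16%:R; split; first by rewrite ltr0n.
exists 0%N => n _ i big_i pi lt_T.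
set T := tmin pi in lt_T *; set d := dim_irr i.
have T_gt0 : (0 < T)%N by rewrite -(ltr_nat R) (le_lt_trans (sqrt_mul_ln_ge0 R n)).
have n_gt0 : (0 < n)%N.
  by have := tmin_add_card_cycle_reps pi; have := card_moved_le pi; rewrite -/T; lia.
have d1 : 'chi_i 1%g = d%:R by rewrite /d /dim_irr truncnK ?Cnat_irr1.
have d_gt0 : (0 : algC) < d%:R by rewrite -d1 irr1_gt0.
have card_bound : (#|'C_(Sn n)[pi]%g| * n ^ T <= (16 ^ T * d) ^ 2)%N.
  rewrite setTI; apply: leq_trans (card_cent1_mul_tmin pi) _.
  have := ltnW (big_fact_lt big_i lt_T); rewrite -/T -/d => fact_bound.
  rewrite (_ : 16 ^ T = 4 ^ T * 4 ^ T)%N; last by rewrite -expnMn.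
  apply: leq_trans (leq_mul (leqnn _) fact_bound) _; apply: eq_leq; ring.
have chi_bound : `|'chi_i pi| ^+ 2 * n%:R ^+ T <= (16%:R ^+ T * d%:R) ^+ 2.
  have orth := irr_normX2_le_cent1 i (in_setT pi).
  apply: le_trans (ler_wpM2r (exprn_ge0 _ (ler0n _ _)) orth) _.
  by rewrite -!natrX -!natrM -natrX ler_nat.
have sqrt_n_gt0 : (0 : algC) < sqrtC n%:R ^+ T by rewrite exprn_gt0 // sqrtC_gt0 ltr0n.
rewrite d1 normrM normfV normr_nat ler_pdivlMr // mulrAC ler_pdivrMr //.
rewrite -(ler_pXn2r (n := 2)) // ?nnegrE ?mulr_ge0 ?exprn_ge0 ?sqrtC_ge0 //.
by rewrite exprMn -exprM mulnC exprM sqrtCK.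
Qed.
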